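(* Let $G$ be a finite simple graph that is $(P_3\cup P_2,K_4)$-free. Let $D_1=\{x\in V(G): \omega(G-N(x))\le 2\}$. If the induced subgraph $G[D_1]$ contains an induced subgraph isomorphic to $P_2\cup P_1$, then $\chi(G)\le 7$.
   Context: $P_n$ is the path on $n$ vertices, $K_4$ the complete graph on $4$ vertices, $\cup$ disjoint union. ''Free''/''contains'' refer to induced subgraphs. $N(x)$ is the (open) neighborhood of $x$, and $G-N(x)$ is the subgraph induced by $V(G)\setminus N(x)$. $\omega$ denotes clique number and $\chi$ chromatic number. *)

From mathcomp Require Import all_boot.
Set Implicit Arguments. Unset Strict Implicit. Unset Printing Implicit Defensive.

Definition simple_graph (T : finType) (e : rel T) : Prop :=
  irreflexive e /\ symmetric e.

Definition nbhd (T : finType) (e : rel T) (x : T) : {set T} := [set y | e x y].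

Definition contains_induced_in (T : finType) (e : rel T) (S : {set T})
    (n : nat) (h : rel 'I_n) : Prop :=
  exists f : 'I_n -> T,
    [/\ injective f, (forall i, f i \in S) & (forall i j, e (f i) (f j) = h i j)].

Definition free (T : finType) (e : rel T) (n : nat) (h : rel 'I_n) : Prop :=
  ~ contains_induced_in e [set: T] h.

Definition cliqueb (T : finType) (e : rel T) (K : {set T}) : bool :=
  [forall x in K, forall y in K, (x != y) ==> e x y].

Definition omega_in (T : finType) (e : rel T) (S : {set T}) : nat :=
  \max_(K : {set T} | (K \subset S) && cliqueb e K) #|K|.

Definition colorableb (T : finType) (e : rel T) (k : nat) : bool :=
  [exists f : {ffun T -> 'I_k}, [forall x, forall y, e x y ==> (f x != f y)]].

(* least k <= #|T| such that G is k-colourable (G is always #|T|-colourable) *)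
Definition chi (T : finType) (e : rel T) : nat :=
  find (colorableb e) (iota 0 #|T|.+1).

Definition P3uP2 : rel 'I_5 := fun i j =>
  let a := nat_of_ord i in let b := nat_of_ord j in
  [|| (a == 0) && (b == 1), (a == 1) && (b == 0), (a == 1) && (b == 2),
      (a == 2) && (b == 1), (a == 3) && (b == 4) | (a == 4) && (b == 3)].

Definition K4 : rel 'I_4 := fun i j => i != j.

Definition P2uP1 : rel 'I_3 := fun i j =>
  let a := nat_of_ord i in let b := nat_of_ord j in
  ((a == 0) && (b == 1)) || ((a == 1) && (b == 0)).

Definition D1 (T : finType) (e : rel T) : {set T} :=
  [set x | omega_in e (~: nbhd e x) <= 2].

From mathcomp Require Import all_boot.

Set Implicit Arguments.
Unset Strict Implicit.
Unset Printing Implicit Defensive.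

(* Fix an induced P2 u P1 inside D1: an edge ab and a vertex c adjacent to
   neither.  Since G is K4-free, the common neighbours of a and b are
   independent.  The other neighbours of a or b split into four classes by
   which of a, b they see and whether they see c; each class is independent,
   e.g. an edge uv of N(a) \ N(c) would give a triangle auv avoiding N(c),
   contradicting c in D1.  The vertices seeing neither a nor b induce a
   matching: a vertex with two such neighbours y, z yields a triangle avoiding
   N(a) if yz is an edge, and an induced P3 u P2 together with ab otherwise.
   Hence 5 + 2 colours suffice. *)

Lemma chi_le_colorable (T : finType) (e : rel T) k : colorableb e k -> chi e <= k.
Proof.
move=> col_k; rewrite /chi; case: leqP => // lt_k_find.
have k_lt_size := leq_trans lt_k_find (find_size (colorableb e) _).
have := before_find 0 lt_k_find.
by rewrite nth_iota ?add0n ?col_k // -(size_iota 0 #|T|.+1).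
Qed.

Lemma colorable_of_nat_colouring (T : finType) (e : rel T) k (f : T -> nat) :
  (forall x, f x < k) -> (forall x y, e x y -> f x != f y) -> colorableb e k.
Proof.
move=> f_lt f_proper; apply/existsP; exists [ffun x => Ordinal (f_lt x)].
apply/forallP => x; apply/forallP => y; apply/implyP => xy.
by rewrite !ffunE; apply: f_proper.
Qed.

Lemma contains_induced_seq (T : finType) (e : rel T) n (h : rel 'I_n) (s : seq T) x0 :
  uniq s -> size s = n -> (forall i j : 'I_n, e (nth x0 s i) (nth x0 s j) = h i j) ->
  contains_induced_in e [set: T] h.
Proof.
move=> s_uniq s_size s_h; exists (nth x0 s); split=> // i j /eqP.
by rewrite nth_uniq ?s_size // => /eqP; apply: val_inj.
Qed.

Section SimpleGraph.
Variables (T : finType) (e : rel T).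
Hypotheses (e_irr : irreflexive e) (e_sym : symmetric e).

Lemma edge_neq x y : e x y -> x != y.
Proof. by apply: contraTneq => ->; rewrite e_irr. Qed.

Lemma nonadj_neq w x y : e y w -> ~~ e x w -> x != y.
Proof. by move=> yw; apply: contraNneq => ->. Qed.

Lemma triangle_omega_in (S : {set T}) p q r :
  e p q -> e q r -> e p r -> p \in S -> q \in S -> r \in S -> 3 <= omega_in e S.
Proof.
move=> pq qr pr pS qS rS.
have -> : 3 = #|[set p; q; r]|.
  by rewrite -setUA cardsU1 cards2 edge_neq // !inE negb_or !edge_neq.
apply: leq_bigmax_cond; apply/andP; split.
  by apply/subsetP => x; rewrite !inE -orbA => /or3P[] /eqP ->.
apply/forallP => x; apply/implyP; rewrite !inE -orbA => /or3P[] /eqP ->;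
apply/forallP => y; apply/implyP; rewrite !inE -orbA => /or3P[] /eqP ->;
by rewrite ?eqxx ?pq ?qr ?pr ?implybT // e_sym ?pq ?qr ?pr ?implybT.
Qed.

Lemma D1_nbhd_indep w z u v : w \in D1 e -> ~~ e z w ->
  e u z -> e v z -> ~~ e u w -> ~~ e v w -> ~~ e u v.
Proof.
rewrite inE => w_D1 zw uz vz uw vw; apply/negP => uv.
have zu : e z u by rewrite e_sym.
have zv : e z v by rewrite e_sym.
have : 3 <= omega_in e (~: nbhd e w).
  by apply: (triangle_omega_in zu uv zv); rewrite !inE e_sym.
by move/leq_trans/(_ w_D1).
Qed.

Lemma K4_free_common_nbhd_indep a b u v : free e K4 ->
  e a b -> e u a -> e u b -> e v a -> e v b -> ~~ e u v.
Proof.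
move=> K4_free ab ua ub va vb; apply/negP => uv; apply: K4_free.
apply: (@contains_induced_seq _ _ _ _ [:: a; b; u; v] a) => //.
  by rewrite /= !inE !negb_or !edge_neq // e_sym.
by move=> [[|[|[|[|i]]]] Hi] [[|[|[|[|j]]]] Hj] //=; rewrite e_sym.
Qed.

Lemma P3uP2_free_far_nbhd a b x y z : free e P3uP2 -> e a b ->
  ~~ e x a -> ~~ e x b -> ~~ e y a -> ~~ e y b -> ~~ e z a -> ~~ e z b ->
  e x y -> e x z -> y != z -> e y z.
Proof.
move=> P3uP2_free ab xa xb ya yb za zb xy xz yz; apply/contraT => nyz.
case: P3uP2_free.
apply: (@contains_induced_seq _ _ _ _ [:: y; x; z; a; b] a) => //.
  have ba : e b a by rewrite e_sym.
  have yx : e y x by rewrite e_sym.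
  by rewrite /= !inE !negb_or yz (edge_neq yx) (edge_neq xz) (edge_neq ab)
    (nonadj_neq ab xb) (nonadj_neq ba xa) (nonadj_neq ab yb) (nonadj_neq ba ya)
    (nonadj_neq ab zb) (nonadj_neq ba za).
move: xa xb ya yb za zb nyz => /negbTE xa /negbTE xb /negbTE ya /negbTE yb
  /negbTE za /negbTE zb /negbTE nyz.
by move=> [[|[|[|[|[|i]]]]] Hi] [[|[|[|[|[|j]]]]] Hj] //=; rewrite e_sym.
Qed.

Definition deg_le1_on (R : {set T}) : Prop :=
  forall x y z, x \in R -> y \in R -> z \in R -> e x y -> e x z -> y = z.

(* On a graph of maximum degree one, exactly one end of each edge has its
   neighbour earlier in the enumeration of T. *)
Definition lower_nbr (R : {set T}) x :=
  [exists z in R, e x z && (enum_rank z < enum_rank x)].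

Lemma lower_nbr_proper (R : {set T}) x y : deg_le1_on R ->
  x \in R -> y \in R -> e x y -> lower_nbr R x != lower_nbr R y.
Proof.
move=> R_deg1 xR yR xy; have yx : e y x by rewrite e_sym.
rewrite /lower_nbr; case: exists_inP => [[z zR /andP[xz lt_zx]] | no_x].
- case: exists_inP => [[w wR /andP[yw lt_wy]] | //].
  rewrite -(R_deg1 x y z) // in lt_zx; rewrite -(R_deg1 y x w) // in lt_wy.
  by have := ltn_trans lt_zx lt_wy; rewrite ltnn.
- case: exists_inP => [// | no_y].
  case: (ltngtP (enum_rank x) (enum_rank y))
    => [lt_xy | lt_yx | /ord_inj/enum_rank_inj x_eq_y].
  + by case: no_y; exists x; rewrite ?yx.
  + by case: no_x; exists y; rewrite ?xy.
  + by rewrite x_eq_y e_irr in xy.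
Qed.

Section Colouring.
Variables a b c : T.
Hypotheses (P3uP2_free : free e P3uP2) (K4_free : free e K4).
Hypotheses (ab : e a b) (ac : ~~ e a c) (bc : ~~ e b c).
Hypotheses (a_D1 : a \in D1 e) (b_D1 : b \in D1 e) (c_D1 : c \in D1 e).

Definition far_from_edge := [set x | ~~ e x a & ~~ e x b].

Definition colour x : nat :=
  if e x a && e x b then 0
  else if e x a then (if e x c then 2 else 1)
  else if e x b then (if e x c then 4 else 3)
  else 5 + lower_nbr far_from_edge x.

Lemma far_from_edge_deg1 : deg_le1_on far_from_edge.
Proof.
move=> x y z; rewrite !inE => /andP[xa xb] /andP[ya yb] /andP[za zb] xy xz.
have yx : e y x by rewrite e_sym.
have zx : e z x by rewrite e_sym.
case: (eqVneq y z) => // /(P3uP2_free_far_nbhd P3uP2_free ab xa xb ya yb za zb xy xz).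
move=> yz.
by have := D1_nbhd_indep a_D1 xa yx zx ya za; rewrite yz.
Qed.

Lemma colour_lt x : colour x < 7.
Proof. by rewrite /colour; case: lower_nbr; repeat case: ifP. Qed.

Lemma colour_proper x y : e x y -> colour x != colour y.
Proof.
move=> xy; have ca : ~~ e c a by rewrite e_sym.
have cb : ~~ e c b by rewrite e_sym.
rewrite /colour.
case: (boolP (e x a)) => xa; case: (boolP (e x b)) => xb;
case: (boolP (e x c)) => xc; case: (boolP (e y a)) => ya;
case: (boolP (e y b)) => yb; case: (boolP (e y c)) => yc => //=.
all: try (have := lower_nbr_proper far_from_edge_deg1 (x:=x) (y:=y);
  rewrite !inE xa xb ya yb eqn_add2l => /(_ isT isT xy);
  by case: (lower_nbr _ x); case: (lower_nbr _ y)).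
all: exfalso; move: xy; apply/negP.
all: first [ exact: K4_free_common_nbhd_indep K4_free ab xa xb ya yb
           | exact: D1_nbhd_indep c_D1 ac xa ya xc yc
           | exact: D1_nbhd_indep b_D1 cb xc yc xb yb
           | exact: D1_nbhd_indep c_D1 bc xb yb xc yc
           | exact: D1_nbhd_indep a_D1 ca xc yc xa ya ].
Qed.
End Colouring.

End SimpleGraph.

Theorem theorem1p1 (T : finType) (e : rel T) :
  simple_graph e ->
  free e P3uP2 -> free e K4 ->
  contains_induced_in e (D1 e) P2uP1 ->
  chi e <= 7.
Proof.
move=> [e_irr e_sym] P3uP2_free K4_free [f [_ f_D1 f_e]].
pose a := f (@Ordinal 3 0 isT); pose b := f (@Ordinal 3 1 isT).
pose c := f (@Ordinal 3 2 isT).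
have ab : e a b by rewrite f_e.
have ac : ~~ e a c by rewrite f_e.
have bc : ~~ e b c by rewrite f_e.
have colour_ok := colour_proper e_irr e_sym P3uP2_free K4_free ab ac bc
  (f_D1 _) (f_D1 _) (f_D1 _).
exact/chi_le_colorable/(colorable_of_nat_colouring (colour_lt e a b c) colour_ok).
Qed.
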